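(* Let $H$ be a separable Hilbert space, $(\Omega,\mathcal{A},\mu)$ a measure space, $f\in L^\infty_\mu(\Omega)$ real-valued with multiplication operator $M_f$ on $L^2_\mu(\Omega)$, and $V:H\to L^2_\mu(\Omega)$ an invertible bounded linear operator such that $A=V^{-1}M_fV$ is surjective. Let $\mathcal{F}(x):=-\frac12(Vx,M_fVx)_{L^2_\mu(\Omega)}$. Then $\mathcal{F}$ is $\tilde\lambda$-convex on the Hilbert space $H$, i.e. $\mathcal{F}((1-\theta)x_1+\theta x_2)\le(1-\theta)\mathcal{F}(x_1)+\theta\mathcal{F}(x_2)-\tilde\lambda\frac{\theta(1-\theta)}{2}\|x_1-x_2\|_H^2$ for all $x_1,x_2\in H$, $\theta\in[0,1]$, where $$\tilde\lambda:=-\operatorname*{ess\,sup}_{\omega\in\Omega}f(\omega)\,\tilde c_V,\qquad \tilde c_V:=\begin{cases}\|V\|^2,&\text{if }\operatorname*{ess\,sup}_\Omega f\ge0,\\ \|V^{-1}\|^{-2},&\text{otherwise},\end{cases}$$ with operator norms $\|V\|$ in $L(H,L^2_\mu(\Omega))$ and $\|V^{-1}\|$ in $L(L^2_\mu(\Omega),H)$.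
   Context: $M_f(\varphi)(\omega)=f(\omega)\varphi(\omega)$ for $\mu$-a.e. $\omega$. *)

From HB Require Import structures.
From mathcomp Require Import all_boot all_order all_algebra.
From mathcomp Require Import all_classical all_reals all_analysis.
From mathcomp Require Import ess_sup_inf hoelder.
Set Implicit Arguments. Unset Strict Implicit. Unset Printing Implicit Defensive.
Import Order.TTheory GRing.Theory Num.Theory.
Import numFieldNormedType.Exports.
Local Open Scope classical_set_scope.
Local Open Scope ring_scope.

Definition is_inner_product (R : realType) (H : normedModType R)
  (ip : H -> H -> R) : Prop :=
  [/\ (forall x y, ip x y = ip y x),
      (forall a x y z, ip (a *: x + y) z = a * ip x z + ip y z) &
      (forall x, ip x x = `|x| ^+ 2)].

Definition separable_space (T : topologicalType) : Prop :=
  exists D : set T, countable D /\ closure D = setT.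

Definition hilbert_space (R : realType) (H : completeNormedModType R) : Prop :=
  exists ip : H -> H -> R, is_inner_product ip.

Definition L2norm d (T : measurableType d) (R : realType)
  (mu : {measure set T -> \bar R}) (g : T -> R) : R :=
  fine ('N[mu]_(2%:E)[EFin \o g])%E.

Definition opnormV d (T : measurableType d) (R : realType)
  (mu : {measure set T -> \bar R}) (H : normedModType R) (V : H -> T -> R) : R :=
  sup [set L2norm mu (V x) | x in [set x : H | `|x| <= 1]].

(* operator norm of V^{-1} : L^2_mu -> H, i.e. sup { |V^{-1} g| : |g|_2 <= 1 },
   where V^{-1} g is the (unique) x with V x = g a.e. *)
Definition opnormVinv d (T : measurableType d) (R : realType)
  (mu : {measure set T -> \bar R}) (H : normedModType R) (V : H -> T -> R) : R :=
  sup [set `|x| | x in [set x : H | L2norm mu (V x) <= 1]].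

(* essential supremum of f, as a real number (ess sup of an L^oo function
   is finite unless mu = 0, in which case fine gives 0) *)
Definition esssupR d (T : measurableType d) (R : realType)
  (mu : {measure set T -> \bar R}) (f : T -> R) : R :=
  fine (ess_sup mu (EFin \o f)).

Definition lambda_tilde d (T : measurableType d) (R : realType)
  (mu : {measure set T -> \bar R}) (H : normedModType R) (V : H -> T -> R)
  (f : T -> R) : R :=
  let cV := if 0 <= esssupR mu f then opnormV mu V ^+ 2
            else (opnormVinv mu V ^+ 2)^-1 in
  - esssupR mu f * cV.

Definition Ffun d (T : measurableType d) (R : realType)
  (mu : {measure set T -> \bar R}) (H : normedModType R) (V : H -> T -> R)
  (f : T -> R) (x : H) : R :=
  - 2^-1 * fine (\int[mu]_t (V x t * (f t * V x t))%:E)%E.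

Definition lambda_convex (R : realType) (H : normedModType R) (F : H -> R)
  (lam : R) : Prop :=
  forall (x1 x2 : H) (th : R), 0 <= th <= 1 ->
    F ((1 - th) *: x1 + th *: x2) <=
      (1 - th) * F x1 + th * F x2 - lam * (th * (1 - th) / 2) * `|x1 - x2| ^+ 2.

From HB Require Import structures.
From mathcomp Require Import all_boot all_order all_algebra.
From mathcomp Require Import all_classical all_reals all_analysis.
From mathcomp Require Import ess_sup_inf hoelder measurable_realfun.
From mathcomp Require Import ring lra.
Import Order.TTheory GRing.Theory Num.Theory.
Import numFieldNormedType.Exports.
Local Open Scope classical_set_scope.
Local Open Scope ring_scope.

(* F is -1/2 times the quadratic form Q x = (V x, f V x), and every quadratic
   form satisfies
     Q ((1-th) x1 + th x2) = (1-th) Q x1 + th Q x2 - th (1-th) Q (x1 - x2).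
   Hence lambda-convexity of F with lambda = -k amounts to Q z <= k |z|^2.
   As f <= s := ess sup f a.e., Q z <= s |V z|^2, and |V z| lies between
   |z| / |V^-1| and |V| |z|; the sign of s decides which bound is used. *)

Lemma lambda_convex_quadratic {R : realType} {H : normedModType R}
    (Q : H -> R) (k : R) :
  (forall x1 x2 th, Q ((1 - th) *: x1 + th *: x2) =
     (1 - th) * Q x1 + th * Q x2 - th * (1 - th) * Q (x1 - x2)) ->
  (forall z, Q z <= k * `|z| ^+ 2) ->
  lambda_convex (fun x => - 2^-1 * Q x) (- k).
Proof.
move=> Qinterp Qle x1 x2 th /andP[th0 th1]; rewrite Qinterp.
have := Qle (x1 - x2); have : 0 <= th * (1 - th) by rewrite mulr_ge0 ?subr_ge0.
nra.
Qed.

Section homogeneous_sup.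
Context {R : realType} {H : lmodType R}.
Variables (p q : H -> R) (c : R).
Hypotheses (pZ : forall a x, p (a *: x) = `|a| * p x)
           (qZ : forall a x, q (a *: x) = `|a| * q x)
           (q_ge0 : forall x, 0 <= q x)
           (p_le : forall x, p x <= c * q x).

Lemma le_sup_homogeneous z : p z <= sup [set p x | x in [set x | q x <= 1]] * q z.
Proof.
have [qz0|qz_neq0] := eqVneq (q z) 0; first by rewrite qz0 mulr0 -(mulr0 c) -qz0.
have qz_gt0 : 0 < q z by rewrite lt0r qz_neq0 q_ge0.
have bounded : has_ubound [set p x | x in [set x | q x <= 1]].
  exists `|c| => _ [x /= qx1 <-]; apply: (le_trans (p_le x)).
  have := ler_norm c; have := q_ge0 x; have := normr_ge0 c; nra.
have unit_qz : q ((q z)^-1 *: z) = 1 by rewrite qZ normfV gtr0_norm ?mulVf.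
have : p ((q z)^-1 *: z) <= sup [set p x | x in [set x | q x <= 1]].
  by apply: ub_le_sup bounded _ _; exists ((q z)^-1 *: z) => //=; rewrite unit_qz.
by rewrite pZ normfV gtr0_norm // ler_pdivrMl // mulrC.
Qed.

End homogeneous_sup.

Lemma ler_signed_sqr_bounds {R : realFieldType} (s a b l r : R) :
  0 <= l -> 0 <= r -> l <= a * r -> r <= b * l ->
  s * l ^+ 2 <= s * (if 0 <= s then a ^+ 2 else (b ^+ 2)^-1) * r ^+ 2.
Proof.
move=> l0 r0 la rb; case: ifPn => [s0|/negbTE sN].
  by rewrite -mulrA ler_wpM2l //; nra.
rewrite -mulrA ler_nM2l ?ltNge ?sN //.
have r2 : r ^+ 2 <= b ^+ 2 * l ^+ 2 by nra.
have [->|b0] := eqVneq b 0; first by rewrite expr0n /= invr0 mul0r sqr_ge0.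
by rewrite ler_pdivrMl // lt_def sqrf_eq0 b0 sqr_ge0.
Qed.

Section Lfun_facts.
Context {d : measure_display} {T : measurableType d} {R : realType}.
Context {mu : {measure set T -> \bar R}}.

Lemma Lfun_measurable {p : \bar R} {h : T -> R} :
  h \in Lfun mu p -> measurable_fun setT h.
Proof. by move=> /[!inE] /andP[/[!inE]]. Qed.

Lemma L2norm_ge0 (h : T -> R) : 0 <= L2norm mu h.
Proof. exact/fine_ge0/Lnorm_ge0. Qed.

Lemma L2norm_sqr (h : T -> R) : h \in Lfun mu 2%:E ->
  L2norm mu h ^+ 2 = \int[mu]_t (h t ^+ 2).
Proof.
move=> /[!inE] /andP[_]; rewrite inE /= /finite_norm => hfin.
have hnum : ('N[mu]_2%:E[EFin \o h])%E \is a fin_num.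
  by rewrite ge0_fin_numE ?Lnorm_ge0.
have two_neq0 : (2 : R) != 0 by rewrite pnatr_eq0.
have := powR_Lnorm mu (EFin \o h) two_neq0.
rewrite -(fineK hnum) poweR_EFin powR_mulrn ?fine_ge0 ?Lnorm_ge0 //.
under eq_integral => t _ do
  rewrite /comp abse_EFin poweR_EFin powR_mulrn // real_normK ?num_real //.
by move=> sqrE; rewrite /Rintegral -sqrE.
Qed.

Lemma L2normZ (h : T -> R) (a : R) : h \in Lfun mu 2%:E ->
  L2norm mu (fun t => a * h t) = `|a| * L2norm mu h.
Proof.
move=> hL.
pose g := Lfun_Sub (lee1n 2) hL.
rewrite /L2norm -[X in fine X]/('N[mu]_2%:E[EFin \o (a \*: g)])%E LnormZ.
by rewrite fineM // ge0_fin_numE ?Lnorm_ge0 //; exact: Lfunction_finite.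
Qed.

Lemma ae_le_Rintegral (g1 g2 : T -> R) :
  mu.-integrable setT (EFin \o g1) -> mu.-integrable setT (EFin \o g2) ->
  (\forall t \ae mu, g1 t <= g2 t) ->
  \int[mu]_t g1 t <= \int[mu]_t g2 t.
Proof.
move=> ig1 ig2 g12; rewrite -subr_ge0 -RintegralB //.
have /measurable_EFinP mg : measurable_fun setT (EFin \o (g2 \- g1)).
  by apply: (measurable_int mu); exact: (integrableB measurableT ig2 ig1).
rewrite /Rintegral (ae_eq_integral (fun t => (Num.max (g2 t - g1 t) 0)%:E)) //.
- by apply/fine_ge0/integral_ge0 => t _; rewrite lee_fin le_max lexx orbT.
- exact/measurable_EFinP.
- by apply/measurable_EFinP; exact: measurable_maxr.
- by apply: filterS g12 => t g12t _; rewrite max_l // subr_ge0.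
Qed.

End Lfun_facts.

Section ess_sup_bound.
Context {d : measure_display} {T : measurableType d} {R : realType}.
Context {mu : {measure set T -> \bar R}}.

Lemma Lfun_infty_ae_bounded {f : T -> R} : f \in Lfun mu +oo%E ->
  exists M, \forall t \ae mu, `|f t| <= M.
Proof.
move=> /[!inE] /andP[_]; rewrite inE /= /finite_norm unlock /Lnorm.
case: ifPn => [_|mu0 _].
  have -> : abse \o (EFin \o f) = EFin \o (Num.norm \o f) by apply: funext.
  exact: ess_supr_bounded.
exists 0, setT; split => //.
by apply/eqP; rewrite eq_le measure_ge0 andbT leNgt.
Qed.

Lemma ae_le_esssupR {f : T -> R} : (exists M, \forall t \ae mu, `|f t| <= M) ->
  \forall t \ae mu, f t <= esssupR mu f.
Proof.
move=> [M fM]; have := ess_sup_ge mu (EFin \o f).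
rewrite /esssupR; case sup_f: (ess_sup mu (EFin \o f)) => [r| |].
- by apply: filterS => t /=; rewrite lee_fin.
- have : (ess_sup mu (EFin \o f) <= M%:E)%E.
    apply/ess_supP; apply: filterS fM => t /= ftM.
    by rewrite lee_fin (le_trans (ler_norm _)).
  by rewrite sup_f.
- by move=> _; have /ess_sup_eqNyP := sup_f; apply: filterS.
Qed.

End ess_sup_bound.

Definition weighted_sqr {T : Type} {R : pzSemiRingType} (f h : T -> R) (t : T) : R :=
  h t * (f t * h t).

Section weighted_square.
Context {d : measure_display} {T : measurableType d} {R : realType}.
Context {mu : {measure set T -> \bar R}} {f : T -> R}.
Hypotheses (mf : measurable_fun setT f)
  (f_bounded : exists M, \forall t \ae mu, `|f t| <= M).

Lemma weighted_sqr_Lfun1 {h} : h \in Lfun mu 2%:E -> weighted_sqr f h \in Lfun mu 1.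
Proof.
move=> hL; have mh := Lfun_measurable hL; have [M fM] := f_bounded.
apply/Lfun1_integrable/integrableP; split.
  by apply/measurable_EFinP; apply: measurable_funM => //; exact: measurable_funM.
have /integrableP[_] := integrableZl measurableT `|M| (Lfun2_integrable_sqr hL).
apply: le_lt_trans; apply: ae_ge0_le_integral => //.
- by apply: measurableT_comp => //; apply/measurable_EFinP;
    apply: measurable_funM => //; exact: measurable_funM.
- by apply: measurableT_comp => //; apply/measurable_EFinP;
    apply: measurable_funM => //; exact: measurable_funX.
- apply: filterS fM => t ftM _; rewrite /= lee_fin.
  rewrite (_ : `|weighted_sqr f h t| = `|f t| * `|h t| ^+ 2); last first.
    by rewrite /weighted_sqr !normrM; ring.
  by rewrite normrM normr_id normrX ler_wpM2r ?exprn_ge0 // (le_trans ftM) ?ler_norm.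
Qed.

Lemma weighted_sqr_integrable {h} : h \in Lfun mu 2%:E ->
  mu.-integrable setT (EFin \o weighted_sqr f h).
Proof. by move=> /weighted_sqr_Lfun1 /Lfun1_integrable. Qed.

Lemma weighted_sqr_le {s : R} {h} : (\forall t \ae mu, f t <= s) ->
  h \in Lfun mu 2%:E -> \int[mu]_t weighted_sqr f h t <= s * L2norm mu h ^+ 2.
Proof.
move=> f_le_s hL.
rewrite L2norm_sqr // -RintegralZl //; last exact: Lfun2_integrable_sqr.
apply: ae_le_Rintegral.
- exact: weighted_sqr_integrable.
- apply: (eq_integrable measurableT (fun t => s%:E * (h t ^+ 2)%:E)%E).
    by move=> t _; rewrite /= EFinM.
  exact/integrableZl/Lfun2_integrable_sqr.
- apply: filterS f_le_s => t fts; rewrite /weighted_sqr mulrCA -expr2.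
  by rewrite ler_wpM2r ?sqr_ge0.
Qed.

Lemma weighted_sqr_interp h1 h2 th :
  h1 \in Lfun mu 2%:E -> h2 \in Lfun mu 2%:E ->
  \int[mu]_t weighted_sqr f (fun t => (1 - th) * h1 t + th * h2 t) t =
    (1 - th) * \int[mu]_t weighted_sqr f h1 t + th * \int[mu]_t weighted_sqr f h2 t
    - th * (1 - th) * \int[mu]_t weighted_sqr f (fun t => h1 t - h2 t) t.
Proof.
move=> h1L h2L.
have h12L : (fun t => h1 t - h2 t) \in Lfun mu 2%:E.
  exact: LfunP (Lfun_Sub (lee1n 2) h1L - Lfun_Sub (lee1n 2) h2L).
have w1L := weighted_sqr_Lfun1 h1L; have w2L := weighted_sqr_Lfun1 h2L.
have w12L := weighted_sqr_Lfun1 h12L.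
transitivity (\int[mu]_t ((1 - th) * weighted_sqr f h1 t + th * weighted_sqr f h2 t
    - th * (1 - th) * weighted_sqr f (fun t => h1 t - h2 t) t)).
  by apply: eq_Rintegral => t _; rewrite /weighted_sqr; ring.
rewrite RintegralB //; last 2 first.
- by apply/Lfun1_integrable; exact: (rpredD (rpredZ _ w1L) (rpredZ _ w2L)).
- by apply/Lfun1_integrable; exact: rpredZ.
by rewrite RintegralD ?RintegralZl //; apply/Lfun1_integrable; rewrite ?rpredZ.
Qed.

End weighted_square.

Section linear_into_L2.
Context {R : realType} {H : normedModType R}.
Context {d : measure_display} {T : measurableType d}.
Context {mu : {measure set T -> \bar R}} {V : H -> T -> R}.
Hypotheses (VL : forall x, V x \in Lfun mu 2%:E)
  (Vlin : forall (a : R) (x y : H) (t : T), V (a *: x + y) t = a * V x t + V y t).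

Lemma linear_V0 : V 0 = fun=> 0.
Proof.
by apply/funext => t; have := Vlin 1 0 0 t; rewrite scale1r addr0 mul1r; lra.
Qed.

Lemma linear_VZ a x : V (a *: x) = fun t => a * V x t.
Proof. by apply/funext => t; rewrite -[a *: x]addr0 Vlin linear_V0 addr0. Qed.

Lemma linear_VB x y : V (x - y) = fun t => V x t - V y t.
Proof.
apply/funext => t; have -> : x - y = (-1) *: y + x by rewrite scaleN1r addrC.
by rewrite Vlin mulN1r addrC.
Qed.

Lemma linear_V_convex_comb x1 x2 th :
  V ((1 - th) *: x1 + th *: x2) = fun t => (1 - th) * V x1 t + th * V x2 t.
Proof. by apply/funext => t; rewrite Vlin linear_VZ. Qed.

Lemma L2norm_VZ a x : L2norm mu (V (a *: x)) = `|a| * L2norm mu (V x).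
Proof. by rewrite linear_VZ L2normZ. Qed.

Lemma L2norm_V_le_opnormV (C : R) : (forall x, L2norm mu (V x) <= C * `|x|) ->
  forall z, L2norm mu (V z) <= opnormV mu V * `|z|.
Proof.
move=> VC; apply: (le_sup_homogeneous _ _ _ L2norm_VZ _ _ VC) => //.
by move=> a x; rewrite normrZ.
Qed.

Lemma norm_le_opnormVinv (c : R) : (forall x, `|x| <= c * L2norm mu (V x)) ->
  forall z, `|z| <= opnormVinv mu V * L2norm mu (V z).
Proof.
move=> Vc; apply: (le_sup_homogeneous _ _ _ _ L2norm_VZ _ Vc) => //.
- by move=> a x; rewrite normrZ.
- by move=> x; exact: L2norm_ge0.
Qed.

End linear_into_L2.

Theorem mainTheorem3 (R : realType) (H : completeNormedModType R)
  (d : measure_display) (T : measurableType d) (mu : {measure set T -> \bar R})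
  (f : T -> R) (V : H -> T -> R) :
  hilbert_space H ->
  separable_space H ->
  (* f in L^oo_mu, real-valued *)
  f \in Lfun mu +oo%E ->
  (* V : H -> L^2_mu linear (on representatives) *)
  (forall x, V x \in Lfun mu 2%:E) ->
  (forall (a : R) (x y : H) (t : T), V (a *: x + y) t = a * V x t + V y t) ->
  (* V bounded *)
  (exists C : R, forall x, L2norm mu (V x) <= C * `|x|) ->
  (* V invertible with bounded inverse *)
  (forall x, V x = (fun=> 0) %[ae mu] -> x = 0) ->
  (forall g : T -> R, g \in Lfun mu 2%:E -> exists x, V x = g %[ae mu]) ->
  (exists c : R, forall x, `|x| <= c * L2norm mu (V x)) ->
  (* A = V^{-1} M_f V surjective: every y equals V^{-1}(f * V x) for some x *)
  (forall y : H, exists x : H, V y = (fun t => f t * V x t) %[ae mu]) ->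
  lambda_convex (Ffun mu V f) (lambda_tilde mu V f).
Proof.
(* Only the two-sided bound on V enters. *)
move=> _ _ fL VL Vlin [C VC] _ _ [c Vc] _.
have mf := Lfun_measurable fL.
have f_bounded := Lfun_infty_ae_bounded fL.
rewrite /lambda_tilde /Ffun /= mulNr.
apply: (lambda_convex_quadratic (fun x => \int[mu]_t weighted_sqr f (V x) t)).
  move=> x1 x2 th; rewrite (linear_V_convex_comb Vlin) (linear_VB Vlin).
  exact: weighted_sqr_interp.
have f_le_sup := ae_le_esssupR f_bounded.
move=> z; apply: le_trans (weighted_sqr_le mf f_bounded f_le_sup (VL z)) _.
apply: ler_signed_sqr_bounds; first exact: L2norm_ge0.
- exact: normr_ge0.
- exact: L2norm_V_le_opnormV VC z.
- exact: norm_le_opnormVinv Vc z.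
Qed.
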